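(* Let $c\ge 1$ be an integer and $f(x_1,\dots,x_c)$ a multivariate polynomial with non-negative coefficients that is recursive-dependent and has a positive real fixed point $C$, i.e. $C=f(C,\dots,C)$ with $C>0$. Let $\mathcal{F}=\bigsqcup_{h\ge0}\mathcal{F}_h$ be a combinatorial class decomposed into finite subclasses whose generating functions $F_h(z)$ are non-constant polynomials with non-negative coefficients satisfying \[F_h(z)=f\bigl(F_{h-1}(z),F_{h-2}(z),\dots,F_{h-c}(z)\bigr)\quad\text{for all } h\ge c,\] and for each $h\ge0$ let $\alpha_h$ be the unique positive real solution of $F_h(z)=C$; the limit $\alpha=\lim_{h\to\infty}\alpha_h$ exists. Let $a_n$ be the number of objects of $\mathcal{F}$ of size $n$, i.e. the coefficient of $z^n$ in $F(z)=\sum_{h\ge0}F_h(z)$. Then \[a_n=\alpha^{-n}\,\theta(n)\] for a function $\theta$ growing at most sub-exponentially, i.e. $\theta(n)=o(\kappa^n)$ for every $\kappa>1$.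
   Context: The polynomial $f$ is called recursive-dependent if there is a constant $k$ (depending only on $f$) such that for any indices $i,j\ge c$ with $i\ge j+k$, there is a sequence of applications of the recurrence $F_h=f(F_{h-1},\dots,F_{h-c})$ (repeatedly substituting it for terms $F_h$ with $h\ge c$) resulting in a polynomial $P$ with $F_i=P(F_{\ell_1},\dots,F_{\ell_m})$ for some indices $0\le\ell_1<\dots<\ell_m\le i$ such that $\partial P/\partial F_j\neq 0$ (i.e. $F_j$ is among the $F_{\ell_r}$ and $P$ genuinely depends on it). *)

From HB Require Import structures.
From mathcomp Require Import all_boot all_order all_algebra.
From mathcomp Require Import reals.
From mathcomp Require Import mpoly.
Set Implicit Arguments. Unset Strict Implicit. Unset Printing Implicit Defensive.
Import Order.TTheory GRing.Theory Num.Theory.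
Local Open Scope ring_scope.

Section Defs.
Variable R : realType.

(* The substitution "F_h := f(F_{h-1},...,F_{h-c})" acting on polynomials in
   the formal variables F_0,...,F_i (variable k : 'I_i.+1 stands for F_k);
   variable x_{j+1} of f (index j : 'I_c) is replaced by F_{h-(j+1)}. *)
Definition rec_subst (c i : nat) (f : {mpoly R[c]}) (h : 'I_i.+1)
  : i.+1.-tuple {mpoly R[i.+1]} :=
  [tuple (if k == h then f \mPo [tuple 'X_(inord (h - j.+1)) | j < c]
          else 'X_k) | k < i.+1].

Definition rec_unfold (c i : nat) (f : {mpoly R[c]}) (s : seq 'I_i.+1)
  : {mpoly R[i.+1]} :=
  foldl (fun P h => P \mPo rec_subst f h) 'X_(@ord_max i) s.

Definition recursive_dependent (c : nat) (f : {mpoly R[c]}) : Prop :=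
  exists k : nat, forall i j : nat, (c <= j)%N -> (j + k <= i)%N ->
    exists s : seq 'I_i.+1, all (fun h : 'I_i.+1 => (c <= h)%N) s /\
      (rec_unfold f s)^`M(inord j) != 0.

Definition mpoly_at_polys (c : nat) (f : {mpoly R[c]}) (G : 'I_c -> {poly R})
  : {poly R} := mmap (@polyC R) G f.

End Defs.

From HB Require Import structures.
From mathcomp Require Import all_boot all_order all_algebra.
From mathcomp Require Import reals.
From mathcomp Require Import mpoly.
From mathcomp Require Import ring lra zify.
Set Implicit Arguments. Unset Strict Implicit. Unset Printing Implicit Defensive.
Import Order.TTheory GRing.Theory Num.Theory.
Local Open Scope ring_scope.

(* Every monomial of f has degree at least 2: a constant term would give all
   F_h a nonzero constant coefficient, and a linear term x_(i+1) would copy a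
   nonzero coefficient of F_(c-1) into infinitely many F_h, whereas each size
   class is finite.  With f(C,...,C) = C this gives f(x) <= t^2/C whenever
   0 <= x_j <= t <= C, so as soon as c consecutive values F_h(z) lie below C,
   all later ones decay geometrically (by the factor t/C per block of c
   indices).  For 0 < z < alpha this happens eventually since alpha_h -> alpha,
   hence sum_h F_h(z) is finite, a_n z^n is bounded, and alpha^n a_n = o(kappa^n)
   for every kappa > 1.  The same argument at a point below alpha_0, ...,
   alpha_(c-1) keeps every alpha_h above it, so alpha > 0. *)

Section NnegPoly.
Variable R : realDomainType.
Implicit Types (p q : {poly R}) (z w : R).

Definition nneg_poly p := forall k, 0 <= p`_k.

Lemma nneg_polyM p q : nneg_poly p -> nneg_poly q -> nneg_poly (p * q).
Proof. by move=> p_ge0 q_ge0 k; rewrite coefM sumr_ge0 // => j _; rewrite mulr_ge0. Qed.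

Lemma nneg_poly_mmap1 c (G : 'I_c -> {poly R}) m :
  (forall i, nneg_poly (G i)) -> nneg_poly (mmap1 G m).
Proof.
move=> G_ge0; have nneg1 : nneg_poly 1 by move=> k; rewrite coef1; case: eqP.
apply: (big_ind nneg_poly nneg1 nneg_polyM) => i _.
by elim: (m i) => [|k IHk]; rewrite ?expr0 // exprS; apply: nneg_polyM.
Qed.

Lemma horner_ge0 p z : nneg_poly p -> 0 <= z -> 0 <= p.[z].
Proof.
by move=> p_ge0 z_ge0; rewrite horner_coef sumr_ge0 // => i _; rewrite mulr_ge0 ?exprn_ge0.
Qed.

Lemma coef_le_horner p z n : nneg_poly p -> 0 <= z -> p`_n * z ^+ n <= p.[z].
Proof.
move=> p_ge0 z_ge0; have [lt_n_p|le_p_n] := ltnP n (size p); last first.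
  by rewrite nth_default // mul0r horner_ge0.
rewrite horner_coef (bigD1 (Ordinal lt_n_p)) //= lerDl sumr_ge0 // => i _.
by rewrite mulr_ge0 ?exprn_ge0.
Qed.

Lemma horner_nneg_ltr p : nneg_poly p -> (1 < size p)%N ->
  {in Num.nneg &, {mono horner p : z w / z < w}}.
Proof.
move=> p_ge0 p_nonconst; apply/leW_mono_in/le_mono_in => z w z_ge0 _ lt_zw.
have w_ge0 : 0 <= w by rewrite ltW // (le_lt_trans z_ge0).
have d_gt0 : (0 < (size p).-1)%N by rewrite -ltnS prednK // ltnW.
have lt_d_p : ((size p).-1 < size p)%N by rewrite prednK // ltnW.
rewrite !horner_coef (bigD1 (Ordinal lt_d_p)) //= [ltRHS](bigD1 (Ordinal lt_d_p)) //=.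
apply: ltr_leD.
  have lead_gt0 : 0 < lead_coef p.
    by rewrite lt_def p_ge0 andbT lead_coef_eq0 -size_poly_gt0 ltnW.
  by rewrite ltr_pM2l // ltrXn2r // gtn_eqF.
apply: ler_sum => i _; rewrite ler_wpM2l //.
by rewrite lerXn2r // ltW.
Qed.

End NnegPoly.

Section MpolyAtPolys.
Variables (R : realType) (c : nat) (f : {mpoly R[c]}).
Hypothesis f_nneg : forall m, 0 <= f@_m.

Lemma horner_mpoly_at_polys (G : 'I_c -> {poly R}) z :
  (mpoly_at_polys f G).[z] = f.@[fun i => (G i).[z]].
Proof.
rewrite /mpoly_at_polys /mmap mevalE horner_sum; apply: eq_bigr => m _.
by rewrite hornerCM horner_prod; congr (_ * _); apply: eq_bigr => i _; rewrite horner_exp.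
Qed.

Lemma coef_mpoly_at_polys_ge (G : 'I_c -> {poly R}) m n :
  (forall i, nneg_poly (G i)) -> f@_m * (mmap1 G m)`_n <= (mpoly_at_polys f G)`_n.
Proof.
move=> G_ge0; rewrite /mpoly_at_polys /mmap coef_sum.
have term_ge0 m' : 0 <= ((f@_m')%:P * mmap1 G m')`_n.
  by rewrite coefCM mulr_ge0 ?nneg_poly_mmap1.
have [m_supp|m_nsupp] := boolP (m \in msupp f); last first.
  by rewrite memN_msupp_eq0 // mul0r sumr_ge0.
by rewrite (bigD1_seq m) ?msupp_uniq //= coefCM lerDl sumr_ge0.
Qed.

End MpolyAtPolys.

Section NnegMpoly.
Variables (R : realFieldType) (c : nat) (f : {mpoly R[c]}).
Hypothesis f_nneg : forall m, 0 <= f@_m.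

Lemma meval_le (u v : 'I_c -> R) : (forall i, 0 <= u i <= v i) -> f.@[u] <= f.@[v].
Proof.
move=> le_uv; rewrite !mevalE ler_sum // => m _; rewrite ler_wpM2l //.
apply: ler_prod => i _; have /andP[u_ge0 le_ui] := le_uv i.
by rewrite exprn_ge0 //= lerXn2r // nnegrE (le_trans u_ge0).
Qed.

Lemma meval_scale_le (s : R) (v : 'I_c -> R) :
  (forall m, (mdeg m < 2)%N -> f@_m = 0) -> 0 <= s <= 1 -> (forall i, 0 <= v i) ->
  f.@[fun i => s * v i] <= s ^+ 2 * f.@[v].
Proof.
move=> f_lowdeg /andP[s_ge0 s_le1] v_ge0; rewrite !mevalE mulr_sumr ler_sum // => m _.
have [lt_m2|le2m] := ltnP (mdeg m) 2; first by rewrite f_lowdeg // !mul0r mulr0.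
rewrite mulrCA ler_wpM2l //.
under eq_bigr do rewrite exprMn.
rewrite big_split /= prodrXr -mdegE ler_wpM2r ?ler_wiXn2l //.
by rewrite prodr_ge0 // => i _; rewrite exprn_ge0.
Qed.

Lemma meval_le_sqr (C t : R) (u : 'I_c -> R) :
  (forall m, (mdeg m < 2)%N -> f@_m = 0) -> 0 < C -> 0 <= t <= C ->
  (forall i, 0 <= u i <= t) -> f.@[u] <= (t / C) ^+ 2 * f.@[fun _ => C].
Proof.
move=> f_lowdeg C_gt0 /andP[t_ge0 t_leC] le_ut.
have tC : t = t / C * C by rewrite divfK ?gt_eqF.
apply: (le_trans (meval_le (v := fun _ => t / C * C) _)) => [i|].
  by rewrite -tC le_ut.
apply: meval_scale_le => //; last by move=> _; exact: ltW.
by rewrite divr_ge0 ?(ltW C_gt0) //= ler_pdivrMr // mul1r.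
Qed.

End NnegMpoly.

Section LowDegreeTerms.
Variables (R : realType) (c : nat) (f : {mpoly R[c]}) (F : nat -> {poly R}).
Hypotheses (f_nneg : forall m, 0 <= f@_m) (F_nneg : forall h, nneg_poly (F h)).
Hypothesis F_rec : forall h, (c <= h)%N ->
  F h = mpoly_at_polys f (fun j : 'I_c => F (h - j.+1)).
Hypothesis F_fin : forall n, exists N, forall h, (N <= h)%N -> (F h)`_n = 0.

Lemma coef_rec_ge h m n : (c <= h)%N ->
  f@_m * (mmap1 (fun j : 'I_c => F (h - j.+1)) m)`_n <= (F h)`_n.
Proof. by move=> le_ch; rewrite [F h]F_rec // coef_mpoly_at_polys_ge. Qed.

Lemma mcoeff0_eq0 : f@_0 = 0.
Proof.
have [N F_N] := F_fin 0; apply/eqP; rewrite eq_le f_nneg andbT.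
by have := coef_rec_ge 0 0 (leq_addl N c); rewrite mmap11 coef1 mulr1 F_N ?leq_addr.
Qed.

Lemma mcoeffU_eq0 i : F c.-1 != 0 -> f@_U_(i) = 0.
Proof.
move=> Fc_neq0; apply/eqP; rewrite eq_le f_nneg andbT leNgt; apply/negP => fU_gt0.
have lt_ic := ltn_ord i.
pose n := (size (F c.-1)).-1.
have coef_gt0 k : 0 < (F (c.-1 + k * i.+1))`_n.
  elim: k => [|k IHk].
    by rewrite mul0n addn0 lt_def F_nneg andbT -lead_coefE lead_coef_eq0.
  have le_c : (c <= c.-1 + k.+1 * i.+1)%N by rewrite mulSn; lia.
  apply: lt_le_trans (coef_rec_ge U_(i) n le_c).
  rewrite mmap1U /= (_ : c.-1 + k.+1 * i.+1 - i.+1 = c.-1 + k * i.+1)%N.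
    exact: mulr_gt0.
  by rewrite mulSn; lia.
have [N F_N] := F_fin n.
have := coef_gt0 N; rewrite F_N ?ltxx //.
by rewrite mulnS; lia.
Qed.

Lemma mcoeff_lowdeg_eq0 m : F c.-1 != 0 -> (mdeg m < 2)%N -> f@_m = 0.
Proof.
move=> Fc_neq0; case deg_m: (mdeg m) => [|[|//]] _.
  by move/eqP: deg_m; rewrite mdeg_eq0 => /eqP ->; exact: mcoeff0_eq0.
have /mdeg1P[i /eqP ->] : mdeg m == 1%N by rewrite deg_m.
exact: mcoeffU_eq0.
Qed.

End LowDegreeTerms.

Lemma sum_expr_divn_le (R : realFieldType) (s : R) c M : (0 < c)%N -> 0 <= s < 1 ->
  \sum_(h < M) s ^+ (h %/ c) <= c%:R / (1 - s).
Proof.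
move=> c_gt0 /andP[s_ge0 s_lt1]; have one_s_gt0 : 0 < 1 - s by rewrite subr_gt0.
elim/ltn_ind: M => M IHM; have [lt_Mc|le_cM] := ltnP M c.
  have le_sum1 : \sum_(h < M) s ^+ (h %/ c) <= \sum_(h < M) 1.
    by rewrite ler_sum // => h _; rewrite exprn_ile1 // ltW.
  apply: le_trans le_sum1 _.
  rewrite sumr_const card_ord ler_pdivlMr //.
  have le_Mc : M%:R <= c%:R :> R by rewrite ler_nat ltnW.
  have M_ge0 : 0 <= M%:R :> R by [].
  nra.
rewrite -(subnKC le_cM) big_split_ord /= (eq_bigr (fun _ => 1)) => [|h _]; last first.
  by rewrite divn_small.
rewrite (eq_bigr (fun h : 'I_(M - c) => s * s ^+ (h %/ c))) => [|h _]; last first.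
  by rewrite divnDl // divnn c_gt0 add1n exprS.
rewrite sumr_const card_ord -mulr_sumr.
have -> : c%:R / (1 - s) = c%:R + s * (c%:R / (1 - s)) by field; rewrite gt_eqF.
by rewrite lerD2l ler_wpM2l // IHM //; lia.
Qed.

Section QuadraticDecay.
Variables (R : realFieldType) (c : nat) (C t0 : R) (x : nat -> R).
Hypotheses (c_gt0 : (0 < c)%N) (t0_ge0 : 0 <= t0) (t0_ltC : t0 < C).
Hypothesis x_init : forall h, (h < c)%N -> x h <= t0.
Hypothesis x_rec : forall h, (c <= h)%N -> forall t, 0 <= t <= C ->
  (forall j : 'I_c, x (h - j.+1) <= t) -> x h * C <= t ^+ 2.

Let C_gt0 : 0 < C. Proof. exact: le_lt_trans t0_ltC. Qed.
Let ratio_ge0 : 0 <= t0 / C. Proof. by rewrite divr_ge0 // ltW. Qed.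
Let ratio_lt1 : t0 / C < 1. Proof. by rewrite ltr_pdivrMr // mul1r. Qed.

Lemma quadratic_decay h : x h <= t0 * (t0 / C) ^+ (h %/ c).
Proof.
elim/ltn_ind: h => h IHh; have [lt_hc|le_ch] := ltnP h c.
  by rewrite divn_small // expr0 mulr1 x_init.
set s := t0 / C; set q := ((h - c) %/ c)%N.
have qE : (h %/ c)%N = q.+1.
  by rewrite -{1}(subnK le_ch) divnDr // divnn c_gt0 addn1.
set t := t0 * s ^+ q.
have t_ge0 : 0 <= t by rewrite mulr_ge0 ?exprn_ge0.
have le_t_t0 : t <= t0 by rewrite ler_piMr // exprn_ile1 // ltW.
have x_le_t (j : 'I_c) : x (h - j.+1) <= t.
  have lt_jc := ltn_ord j.
  have lt_jh : (h - j.+1 < h)%N by lia.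
  apply: le_trans (IHh _ lt_jh) _.
  by rewrite ler_wpM2l // ler_wiXn2l ?(ltW ratio_lt1) // leq_div2r //; lia.
have t_leC : t <= C by rewrite (le_trans le_t_t0) // ltW.
have := x_rec le_ch (t := t) (introT andP (conj t_ge0 t_leC)) x_le_t => xC_le.
rewrite qE exprS mulrCA -(ler_pM2r C_gt0) (le_trans xC_le) //.
have -> : s * t * C = t * t0 by rewrite /s; field; rewrite gt_eqF.
by rewrite expr2 ler_wpM2l.
Qed.

Lemma quadratic_decay_le h : x h <= t0.
Proof.
by rewrite (le_trans (quadratic_decay h)) // ler_piMr // exprn_ile1 // ltW.
Qed.

Lemma sum_quadratic_decay M : \sum_(h < M) x h <= t0 * (c%:R / (1 - t0 / C)).
Proof.
rewrite (le_trans (ler_sum _ (fun (h : 'I_M) _ => quadratic_decay h))) //.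
by rewrite -mulr_sumr ler_wpM2l // sum_expr_divn_le // ratio_ge0 ratio_lt1.
Qed.

End QuadraticDecay.

Section RecursiveClass.
Variables (R : realType) (c : nat) (f : {mpoly R[c]}) (C : R) (F : nat -> {poly R}).
Hypotheses (c_gt0 : (0 < c)%N) (f_nneg : forall m, 0 <= f@_m).
Hypotheses (C_gt0 : 0 < C) (fC : f.@[fun _ => C] = C).
Hypothesis f_lowdeg : forall m, (mdeg m < 2)%N -> f@_m = 0.
Hypothesis F_nneg : forall h, nneg_poly (F h).
Hint Resolve F_nneg : core.
Hypothesis F_rec : forall h, (c <= h)%N ->
  F h = mpoly_at_polys f (fun j : 'I_c => F (h - j.+1)).

Lemma horner_rec_le_sqr (z t : R) h : 0 <= z -> (c <= h)%N -> 0 <= t <= C ->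
  (forall j : 'I_c, (F (h - j.+1)).[z] <= t) -> (F h).[z] * C <= t ^+ 2.
Proof.
move=> z_ge0 le_ch t_range le_Ft; rewrite F_rec // horner_mpoly_at_polys.
have u_range (j : 'I_c) : 0 <= (F (h - j.+1)).[z] <= t
  by rewrite le_Ft andbT horner_ge0.
have := meval_le_sqr f_nneg f_lowdeg C_gt0 t_range u_range; rewrite fC => le_sqr.
rewrite (le_trans (ler_wpM2r (ltW C_gt0) le_sqr)) //.
by rewrite -mulrA -expr2 expr_div_n divfK // expf_neq0 // gt_eqF.
Qed.

Lemma horner_tail_bounded (z : R) H : 0 <= z ->
  (forall j, (j < c)%N -> (F (H + j)).[z] < C) ->
  exists2 t0, t0 < C & (forall i, (F (H + i)).[z] <= t0) /\
    exists B, forall M, \sum_(i < M) (F (H + i)).[z] <= B.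
Proof.
move=> z_ge0 window_lt.
pose t0 := \big[Num.max/0]_(j < c) (F (H + j)).[z].
have t0_ge0 : 0 <= t0 by exact: bigmax_ge_id.
have t0_ltC : t0 < C by rewrite bigmax_lt // => j _; rewrite window_lt.
have window_le j : (j < c)%N -> (F (H + j)).[z] <= t0.
  by move=> lt_jc; exact: (le_bigmax _ (fun j : 'I_c => (F (H + j)).[z]) (Ordinal lt_jc)).
have shift_rec i : (c <= i)%N -> forall t : R, 0 <= t <= C ->
    (forall j : 'I_c, (F (H + (i - j.+1))).[z] <= t) -> (F (H + i)).[z] * C <= t ^+ 2.
  move=> le_ci t t_range le_Ft; apply: horner_rec_le_sqr => // [|j].
    exact: leq_trans le_ci (leq_addl _ _).
  by rewrite -addnBA ?le_Ft // (leq_trans (ltn_ord j)).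
exists t0 => //; split => [i|].
  exact: quadratic_decay_le window_le shift_rec i.
by eexists => M; exact: sum_quadratic_decay window_le shift_rec M.
Qed.

Lemma horner_tail_lt (z : R) H : 0 <= z ->
  (forall j, (j < c)%N -> (F (H + j)).[z] < C) -> forall h, (H <= h)%N -> (F h).[z] < C.
Proof.
move=> z_ge0 /(horner_tail_bounded z_ge0)[t0 t0_ltC [tail_le _]] h le_Hh.
by rewrite -(subnKC le_Hh) (le_lt_trans (tail_le _)).
Qed.

Lemma sum_horner_bounded (z : R) H : 0 <= z ->
  (forall j, (j < c)%N -> (F (H + j)).[z] < C) ->
  exists B, forall M, \sum_(h < M) (F h).[z] <= B.
Proof.
move=> z_ge0 /(horner_tail_bounded z_ge0)[_ _ [_ [B tail_sum_le]]].
exists (\sum_(h < H) (F h).[z] + B) => M.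
have F_ge0 h : 0 <= (F h).[z] by exact: horner_ge0.
apply: (@le_trans _ _ (\sum_(h < H + M) (F h).[z])).
  rewrite (big_ord_widen _ (fun h => (F h).[z]) (leq_addl H M)).
  by rewrite [leRHS](bigID (fun h : 'I_(H + M) => (h < M)%N)) /= lerDl sumr_ge0.
by rewrite big_split_ord lerD2l tail_sum_le.
Qed.

Variables (alphas : nat -> R) (alpha : R).
Hypothesis F_nonconst : forall h, (1 < size (F h))%N.
Hypothesis alphas_root : forall h, 0 < alphas h /\ (F h).[alphas h] = C.
Hypothesis alphas_cvg : forall e : R, 0 < e ->
  exists N, forall h, (N <= h)%N -> `|alphas h - alpha| < e.

Lemma horner_ltC (z : R) h : 0 <= z -> ((F h).[z] < C) = (z < alphas h).
Proof.
move=> z_ge0; have [/ltW alpha_ge0 <-] := alphas_root h.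
exact: horner_nneg_ltr.
Qed.

Lemma alpha_gt0 : 0 < alpha.
Proof.
pose z := (\big[Num.min/1]_(j < c) alphas j) / 2.
have min_gt0 : 0 < \big[Num.min/1]_(j < c) alphas j.
  by rewrite lt_bigmin // => j _; case: (alphas_root j).
have z_gt0 : 0 < z by rewrite divr_gt0.
have lt_z_min : z < \big[Num.min/1]_(j < c) alphas j.
  by rewrite ltr_pdivrMr // ltr_pMr // ltr1n.
have z_lt_alphas h : z < alphas h.
  rewrite -horner_ltC ?ltW //.
  apply: horner_tail_lt (leq0n h) => [|j lt_jc]; first exact: ltW.
  rewrite add0n horner_ltC ?ltW // (lt_le_trans lt_z_min) //.
  exact: (bigmin_le _ (Ordinal lt_jc) (fun j : 'I_c => alphas j)).
apply: lt_le_trans z_gt0 _; rewrite leNgt; apply/negP => lt_alpha_z.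
have /alphas_cvg[N alphas_near] : 0 < z - alpha by rewrite subr_gt0.
have := alphas_near N (leqnn N); have := z_lt_alphas N.
have := ler_norm (alphas N - alpha); lra.
Qed.

Lemma sum_coef_expr_bounded (z : R) : 0 < z -> z < alpha ->
  exists B, forall n M, (\sum_(h < M) (F h)`_n) * z ^+ n <= B.
Proof.
move=> z_gt0 lt_z_alpha.
have /alphas_cvg[N alphas_near] : 0 < alpha - z by rewrite subr_gt0.
have window_lt j : (j < c)%N -> (F (N + j)).[z] < C.
  move=> _; rewrite horner_ltC ?ltW //.
  by have := alphas_near (N + j)%N (leq_addr j N); rewrite distrC ltr_norml; lra.
have [B sum_le] := sum_horner_bounded (ltW z_gt0) window_lt.
exists B => n M; rewrite mulr_suml (le_trans _ (sum_le M)) //.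
by apply: ler_sum => h _; rewrite coef_le_horner ?ltW.
Qed.

End RecursiveClass.

Section SubexponentialGrowth.
Variable R : archiRealFieldType.

Lemma bernoulli_le (y : R) n : 0 <= y -> 1 + n%:R * y <= (1 + y) ^+ n.
Proof.
move=> y_ge0; elim: n => [|n IHn]; first by rewrite mul0r addr0 expr0.
have : (1 + y) * (1 + n%:R * y) <= (1 + y) * (1 + y) ^+ n by rewrite ler_wpM2l // addr_ge0.
have : 0 <= n%:R * y * y by rewrite !mulr_ge0.
by rewrite exprS -natr1; nra.
Qed.

Lemma expr_lt1_small (r B e : R) : 0 < r < 1 -> 0 <= B -> 0 < e ->
  exists N, forall n, (N <= n)%N -> B * r ^+ n <= e.
Proof.
move=> /andP[r_gt0 r_lt1] B_ge0 e_gt0.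
pose y := r^-1 - 1; have y_gt0 : 0 < y by rewrite subr_gt0 invf_gt1.
have bound_ge0 : 0 <= B / (e * y) by rewrite divr_ge0 // ltW // mulr_gt0.
exists (Num.Def.archi_bound (B / (e * y))) => n le_Nn.
have le_bound_n : B / (e * y) <= n%:R.
  by rewrite (le_trans (ltW (archi_boundP bound_ge0))) // ler_nat.
have := bernoulli_le n (ltW y_gt0).
have -> : 1 + y = r^-1 by rewrite /y addrC subrK.
rewrite exprVn => le_pow.
have le_B : B <= n%:R * (e * y) by rewrite -ler_pdivrMr ?mulr_gt0.
rewrite -ler_pdivlMr ?exprn_gt0 //; nra.
Qed.

Lemma subexponential_growth (alpha : R) (a : nat -> R) :
  0 < alpha -> (forall n, 0 <= a n) ->
  (forall z, 0 < z -> z < alpha -> exists B, forall n, a n * z ^+ n <= B) ->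
  forall kappa, 1 < kappa -> forall e, 0 < e ->
  exists N, forall n, (N <= n)%N -> `|alpha ^+ n * a n| <= e * kappa ^+ n.
Proof.
move=> alpha_gt0 a_ge0 a_bounded kappa kappa_gt1 e e_gt0.
pose q := 2 * kappa / (kappa + 1).
have kappa1_gt0 : 0 < kappa + 1 by lra.
have q_gt1 : 1 < q by rewrite /q ltr_pdivlMr //; lra.
have q_lt_kappa : q < kappa by rewrite /q ltr_pdivrMr //; nra.
have z_gt0 : 0 < alpha / q by rewrite divr_gt0 //; lra.
have z_lt_alpha : alpha / q < alpha by rewrite ltr_pdivrMr; nra.
have [B a_le] := a_bounded _ z_gt0 z_lt_alpha.
have B_ge0 : 0 <= B by apply: le_trans (a_le 0%N); rewrite expr0 mulr1.
have kappa_gt0 : 0 < kappa by lra.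
have r_range : 0 < q / kappa < 1.
  by rewrite divr_gt0 //=; [rewrite ltr_pdivrMr // mul1r|lra].
have [N small] := expr_lt1_small r_range B_ge0 e_gt0.
exists N => n le_Nn.
rewrite ger0_norm; last by rewrite mulr_ge0 // exprn_ge0 // ltW.
have -> : alpha ^+ n * a n = (q / kappa) ^+ n * kappa ^+ n * (a n * (alpha / q) ^+ n).
  rewrite -[in LHS](_ : q / kappa * kappa * (alpha / q) = alpha); last by field; lra.
  by rewrite !exprMn; ring.
have r_ge0 : 0 <= (q / kappa) ^+ n by rewrite exprn_ge0 // ltW // (andP r_range).1.
have kappa_n_ge0 : 0 <= kappa ^+ n by rewrite exprn_ge0 // ltW.
rewrite (le_trans (ler_wpM2l (mulr_ge0 r_ge0 kappa_n_ge0) (a_le n))) //.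
by rewrite mulrC mulrA ler_wpM2r // small.
Qed.

End SubexponentialGrowth.

Theorem theorem4 (R : realType) (c : nat) (f : {mpoly R[c]}) (C : R)
    (F : nat -> {poly R}) (alphas : nat -> R) (alpha : R) (a : nat -> R) :
  (1 <= c)%N ->
  (* f has non-negative coefficients, is recursive-dependent, and has the
     positive fixed point C *)
  (forall m, 0 <= f@_m) ->
  recursive_dependent f ->
  0 < C -> f.@[fun _ => C] = C ->
  (* F_h : generating functions of the finite subclasses F_h: non-constant
     polynomials whose coefficients are counts (natural numbers) *)
  (forall h n, exists k : nat, (F h)`_n = k%:R) ->
  (forall h, (1 < size (F h))%N) ->
  (* combinatorial class: finitely many objects of each size *)
  (forall n, exists N, forall h, (N <= h)%N -> (F h)`_n = 0) ->
  (* recurrence *)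
  (forall h, (c <= h)%N ->
     F h = mpoly_at_polys f (fun j : 'I_c => F (h - j.+1)%N)) ->
  (* alpha_h : the positive real solution of F_h(z) = C *)
  (forall h, 0 < alphas h /\ (F h).[alphas h] = C) ->
  (* alpha = lim alpha_h *)
  (forall e : R, 0 < e -> exists N, forall h, (N <= h)%N ->
     `|alphas h - alpha| < e) ->
  (* a_n = [z^n] sum_h F_h(z) *)
  (forall n, exists N, forall M, (N <= M)%N ->
     a n = \sum_(h < M) (F h)`_n) ->
  exists theta : nat -> R,
    (forall n, a n = alpha ^- n * theta n) /\
    (forall kappa : R, 1 < kappa -> forall e : R, 0 < e ->
       exists N, forall n, (N <= n)%N -> `|theta n| <= e * kappa ^+ n).
Proof.
move=> c_gt0 f_nneg _ C_gt0 fC F_nat F_nonconst F_fin F_rec alphas_root alphas_cvg a_sum.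
have F_nneg h : nneg_poly (F h) by move=> k; have [n ->] := F_nat h k.
have f_lowdeg m : (mdeg m < 2)%N -> f@_m = 0.
  by apply: mcoeff_lowdeg_eq0 => //; rewrite -size_poly_gt0 ltnW.
have alpha_pos : 0 < alpha := alpha_gt0 c_gt0 f_nneg C_gt0 fC f_lowdeg F_nneg F_rec
  F_nonconst alphas_root alphas_cvg.
exists (fun n => alpha ^+ n * a n); split => [n|].
  by rewrite mulKf // expf_neq0 // gt_eqF.
apply: subexponential_growth => // [n|z z_gt0 lt_z_alpha].
  have [N a_eq] := a_sum n; rewrite (a_eq N) //.
  by apply: sumr_ge0 => h _; apply: F_nneg.
have [B coef_le] := sum_coef_expr_bounded c_gt0 f_nneg C_gt0 fC f_lowdeg F_nneg F_rec
  F_nonconst alphas_root alphas_cvg z_gt0 lt_z_alpha.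
by exists B => n; have [N a_eq] := a_sum n; rewrite (a_eq N).
Qed.
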